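(* Let $A$ be an $N\times N$ $\{0,1\}$-matrix with no zero row and no zero column, and let $\tau_+,\tau_-:\mathcal{V}_A\to\Omega_A$ satisfy the cylinder condition. For $i=1,\dots,N$ put $\mathfrak{s}_i:=\mathfrak{s}_{i,\tau_+}\oplus\mathfrak{s}_{i,\tau_-}$ on $\ell^2(\mathcal{V}_A,\mathbb{C}^2)$. Then: (1) $\mathfrak{s}_i$ and $\mathfrak{s}_i^*$ preserve $C_c(\mathcal{V}_A,\mathbb{C}^2)$; (2) for each $s\in(0,1]$, $\mathfrak{s}_i$ and $\mathfrak{s}_i^*$ have bounded commutators with $D_{\mathcal{V},s}$; (3) there is a sequence $(f_k)\subseteq C_c(\mathcal{V}_A,\mathbb{C}^2)$ with $\|f_k\|=1$ and $\|[D^{BP}_{\mathcal{V}},\mathfrak{s}_i]f_k\|\to\infty$.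
   Context: $\mathcal{V}_A$: admissible finite words ($A_{\mu_j\mu_{j+1}}=1$) including the empty word $\circ$; $\Omega_A$: infinite admissible sequences; $C_\mu$: cylinder set of sequences starting with $\mu$. $\mathfrak t:\mathcal{V}_A\to\Omega_A$ satisfies the cylinder condition if $\mathfrak t(\mu)\in C_\mu$ for all $\mu$. $\pi_{\mathfrak t}(f)\delta_\mu=f(\mathfrak t(\mu))\delta_\mu$ for $f\in C(\Omega_A)$. $\sigma_{\mathcal V}(\mu_1\mu_2\cdots\mu_k)=\mu_2\cdots\mu_k$; $V_\sigma\in\mathbb{B}(\ell^2(\mathcal{V}_A))$ is $(V_\sigma f)(v)=f(\sigma_{\mathcal V}(v))$ for $v\ne\circ$ and $(V_\sigma f)(\circ)=0$; $\mathfrak{s}_{i,\mathfrak t}:=\pi_{\mathfrak t}(\chi_{C_i})V_\sigma$. On $\ell^2(\mathcal{V}_A,\mathbb{C}^2)=\ell^2(\mathcal{V}_A)\oplus\ell^2(\mathcal{V}_A)$: $D_{\mathcal{V},s}(\phi_+,\phi_-)(\mu)=|\mu|^s(\phi_-(\mu),\phi_+(\mu))$ and $D^{BP}_{\mathcal V}(\phi_+,\phi_-)(\mu)=e^{|\mu|}(\phi_-(\mu),\phi_+(\mu))$, self-adjoint closures from $C_c(\mathcal{V}_A,\mathbb{C}^2)$. *)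

From HB Require Import structures.
From mathcomp Require Import all_boot all_order all_algebra.
From mathcomp Require Import all_classical all_reals all_analysis.
From mathcomp Require Import complex.
Set Implicit Arguments. Unset Strict Implicit. Unset Printing Implicit Defensive.
Import Order.TTheory GRing.Theory Num.Theory.
Local Open Scope ring_scope.
Local Open Scope classical_set_scope.
Local Open Scope complex_scope.

Section Defs.
Variables (R : realType) (N : nat) (A : 'M[bool]_N).

(* finite words over the alphabet 'I_N (letter j+1 of the paper is j : 'I_N) *)
Definition word := seq 'I_N.
Definition iseq := nat -> 'I_N.

(* admissible finite words V_A (includes the empty word [::] = ∘) *)
Definition admissible (mu : word) : bool := sorted (fun a b => A a b) mu.
Definition OmegaA (x : iseq) : Prop := forall n, A (x n) (x n.+1).
Definition cylinder (mu : word) (x : iseq) : Prop :=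
  forall k, (k < size mu)%N -> x k = nth (x k) mu k.
Definition cylinder_condition (t : word -> iseq) : Prop :=
  forall mu, admissible mu -> OmegaA (t mu) /\ cylinder mu (t mu).

Definition chiC (mu : word) (x : iseq) : R[i] :=
  if [forall k : 'I_(size mu), x k == nth (x k) mu k] then 1 else 0.

(* functions on V_A (extended by 0 outside V_A) *)
Definition fn := word -> R[i].
(* C^2-valued functions, l^2(V_A,C^2) = l^2(V_A) (+) l^2(V_A) *)
Definition fn2 := (fn * fn)%type.

Definition pi_t (t : word -> iseq) (f : iseq -> R[i]) (phi : fn) : fn :=
  fun mu => if admissible mu then f (t mu) * phi mu else 0.

Definition Vsigma (phi : fn) : fn :=
  fun v => if admissible v then
             (match v with [::] => 0 | _ :: w => phi w end) else 0.

Definition frak_s (t : word -> iseq) (i : 'I_N) (phi : fn) : fn :=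
  pi_t t (chiC [:: i]) (Vsigma phi).

Definition frak_s2 (tp tm : word -> iseq) (i : 'I_N) (f : fn2) : fn2 :=
  (frak_s tp i f.1, frak_s tm i f.2).

Definition D_Vs (s : R) (f : fn2) : fn2 :=
  (fun mu => ((size mu)%:R `^ s)%:C * f.2 mu,
   fun mu => ((size mu)%:R `^ s)%:C * f.1 mu).

Definition D_BP (f : fn2) : fn2 :=
  (fun mu => (expR (size mu)%:R)%:C * f.2 mu,
   fun mu => (expR (size mu)%:R)%:C * f.1 mu).

Definition Cc (f : fn2) : Prop :=
  finite_set [set v | f.1 v != 0 \/ f.2 v != 0] /\
  (forall v, ~~ admissible v -> f.1 v = 0 /\ f.2 v = 0).

(* l^2 norm (meaningful for finitely supported f) *)
Definition norm2 (f : fn2) : R :=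
  Num.sqrt (\sum_(v \in [set: word])
              (Normc.normc (f.1 v) ^+ 2 + Normc.normc (f.2 v) ^+ 2)).

(* inner product (meaningful when g is finitely supported) *)
Definition ip (f g : fn2) : R[i] :=
  \sum_(v \in [set: word]) ((f.1 v)^* * g.1 v + (f.2 v)^* * g.2 v).

Definition delta (w : word) : fn := fun v => if v == w then 1 else 0.
Definition fn0 : fn := fun _ => 0.

(* Hilbert adjoint of T, computed through its matrix coefficients in the
   orthonormal basis (delta_w,0), (0,delta_w), w in V_A:
   (T^* g)(w)_k = < T e_{w,k}, g >. *)
Definition adj (T : fn2 -> fn2) (g : fn2) : fn2 :=
  (fun w => if admissible w then ip (T (delta w, fn0)) g else 0,
   fun w => if admissible w then ip (T (fn0, delta w)) g else 0).

Definition comm (D T : fn2 -> fn2) (f : fn2) : fn2 :=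
  (fun v => (D (T f)).1 v - (T (D f)).1 v,
   fun v => (D (T f)).2 v - (T (D f)).2 v).

Definition preserves_Cc (T : fn2 -> fn2) : Prop := forall f, Cc f -> Cc (T f).

Definition bounded_comm (D T : fn2 -> fn2) : Prop :=
  exists C : R, forall f, Cc f -> norm2 (comm D T f) <= C * norm2 f.

End Defs.

From HB Require Import structures.
From mathcomp Require Import all_boot all_order all_algebra.
From mathcomp Require Import all_classical all_reals all_analysis.
From mathcomp Require Import complex lra.
Import Order.TTheory GRing.Theory Num.Theory.
Set Implicit Arguments. Unset Strict Implicit. Unset Printing Implicit Defensive.
Local Open Scope ring_scope.
Local Open Scope classical_set_scope.

(* Under the cylinder condition [chi_{C_i}(tau mu)] only depends on the first
   letter of [mu], so [s_{i,tau_+}] and [s_{i,tau_-}] are both the partial shift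
   [phi |-> (i w |-> phi w)] on admissible words, with adjoint
   [phi |-> (w |-> phi (i w))].  An operator acting diagonally by [g(|mu|)]
   commutes with these shifts up to the increment [g(n+1) - g(n)].  For
   [g(n) = n^s], [0 < s <= 1], subadditivity of [x |-> x^s] bounds the
   increments by 1, so the commutators are contractions; for [g(n) = e^n] the
   increments [e^n (e - 1)] are unbounded, as seen on [delta_w] for admissible
   words [i w] of every length, which exist because [A] has no zero row. *)

Section FiniteSupportSums.
Variable T : choiceType.

Lemma fsumT_seq (V : nmodType) (F : T -> V) (r : seq T) : uniq r ->
  (forall v, v \notin r -> F v = 0) ->
  \sum_(v \in [set: T]) F v = \sum_(v <- r) F v.
Proof.
move=> ur Fr; rewrite (fsbigE r) //; last by move=> v _; exact: Fr.
by apply: eq_bigl => v; rewrite in_setT.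
Qed.

Variable R : numDomainType.

Lemma ler_fsum (F G : T -> R) (r : seq T) : uniq r ->
  (forall v, v \notin r -> F v = 0 /\ G v = 0) -> (forall v, G v <= F v) ->
  \sum_(v \in [set: T]) G v <= \sum_(v \in [set: T]) F v.
Proof.
move=> ur FGr GF; rewrite !(fsumT_seq (r := r)) // => [|v /FGr[] //|v /FGr[] //].
exact: ler_sum.
Qed.

Lemma fsum_ge_seq (F : T -> R) (r s : seq T) : uniq r ->
  (forall v, v \notin s -> F v = 0) -> (forall v, 0 <= F v) ->
  \sum_(v <- r) F v <= \sum_(v \in [set: T]) F v.
Proof.
move=> ur Fs F0; rewrite (fsumT_seq (r := undup (r ++ s))) ?undup_uniq //; last first.
  by move=> v; rewrite mem_undup mem_cat negb_or => /andP[_ /Fs].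
rewrite [leRHS](bigID (mem r)) /= -[leLHS]addr0 lerD ?sumr_ge0 //.
have perm_r : perm_eq r [seq v <- undup (r ++ s) | v \in r].
  apply: uniq_perm; rewrite ?filter_uniq ?undup_uniq // => v.
  by rewrite mem_filter mem_undup mem_cat; case: (v \in r).
by rewrite (perm_big _ perm_r) big_filter.
Qed.

Lemma ler_fsum_comp (h : T -> T) (F G : T -> R) (r : seq T) :
  injective h -> uniq r ->
  (forall w, w \notin r -> F w = 0) -> (forall v, v \notin map h r -> G v = 0) ->
  (forall w, G (h w) <= F w) ->
  \sum_(v \in [set: T]) G v <= \sum_(v \in [set: T]) F v.
Proof.
move=> hi ur Fr Gr GF.
rewrite (fsumT_seq (r := map h r)) ?map_inj_uniq // (fsumT_seq (r := r)) //.
by rewrite big_map; exact: ler_sum.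
Qed.

Lemma ler_fsum_compr (h : T -> T) (F G : T -> R) (r s : seq T) :
  injective h -> uniq r ->
  (forall w, w \notin r -> G w = 0) -> (forall v, v \notin s -> F v = 0) ->
  (forall v, 0 <= F v) -> (forall w, G w <= F (h w)) ->
  \sum_(v \in [set: T]) G v <= \sum_(v \in [set: T]) F v.
Proof.
move=> hi ur Gr Fs F0 GF; rewrite (fsumT_seq (r := r)) //.
have uhr : uniq (map h r) by rewrite map_inj_uniq.
apply: (le_trans _ (fsum_ge_seq uhr Fs F0)).
by rewrite big_map; exact: ler_sum.
Qed.

End FiniteSupportSums.

Section PowerIncrements.
Variable R : realType.

Lemma ger1_powR_ge0 (x s : R) : 0 <= x <= 1 -> s <= 1 -> x <= x `^ s.
Proof.
move=> /andP[x0 x1] s1; have [->|xn0] := eqVneq x 0; first exact: powR_ge0.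
by apply: ger1_powR => //; rewrite lt0r xn0 x0.
Qed.

Lemma powR_subadd (x y s : R) : 0 <= x -> 0 <= y -> 0 < s <= 1 ->
  (x + y) `^ s <= x `^ s + y `^ s.
Proof.
move=> x0 y0 /andP[s0 s1]; have [xy0|xy] := eqVneq (x + y) 0.
  by rewrite xy0 powR0 ?gt_eqF // addr_ge0 ?powR_ge0.
have xy0 : 0 < x + y by rewrite lt0r xy addr_ge0.
have frac_le (z : R) : 0 <= z -> z <= x + y -> z / (x + y) <= (z / (x + y)) `^ s.
  move=> z0 zxy; apply: ger1_powR_ge0 => //.
  apply/andP; split; first by rewrite divr_ge0 // ltW.
  by rewrite ler_pdivrMr // mul1r.
have powR_split (z : R) : 0 <= z -> z `^ s = (x + y) `^ s * (z / (x + y)) `^ s.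
  move=> z0; rewrite -powRM ?divr_ge0 ?(ltW xy0) //.
  by rewrite mulrC divfK // gt_eqF.
rewrite (powR_split x) // (powR_split y) // -mulrDr -[leLHS]mulr1 ler_wpM2l ?powR_ge0 //.
have -> : 1 = x / (x + y) + y / (x + y) by rewrite -mulrDl divff // gt_eqF.
by apply: lerD; apply: frac_le; rewrite ?lerDl ?lerDr.
Qed.

Lemma powR_succ_sub (s : R) (n : nat) : 0 < s <= 1 ->
  `|n.+1%:R `^ s - n%:R `^ s| <= 1.
Proof.
move=> /[dup] s01 /andP[s0 _].
have incr_ge0 : 0 <= n.+1%:R `^ s - n%:R `^ s.
  by rewrite subr_ge0; apply: ge0_ler_powR; rewrite ?nnegrE ?ler_nat // ltW.
rewrite ger0_norm // lerBlDr -natr1.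
by apply: le_trans (powR_subadd (ler0n _ n) ler01 s01) _; rewrite powR1 addrC.
Qed.

Lemma expR_succ_sub (n : nat) : n%:R <= expR n.+1%:R - expR n%:R :> R.
Proof.
have e2 : 2 <= expR (1 : R) by rewrite (le_trans _ (expR_ge1Dx 1)) // -natr1.
have en : n%:R + 1 <= expR (n%:R : R) by rewrite addrC; exact: expR_ge1Dx.
rewrite -natr1 expRD.
have : expR (n%:R : R) * 2 <= expR n%:R * expR 1 by rewrite ler_wpM2l ?expR_ge0.
lra.
Qed.

End PowerIncrements.

Section ShiftOperators.
Variables (R : realType) (N : nat) (A : 'M[bool]_N).
Implicit Types (f : fn2 R N) (phi : fn R N) (v w : word N) (g : nat -> R).

Lemma admissible_behead a w : admissible A (a :: w) -> admissible A w.
Proof. exact: path_sorted. Qed.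

Lemma Cc_seq_support f : Cc A f ->
  exists2 r : seq (word N), uniq r & forall v, v \notin r -> f.1 v = 0 /\ f.2 v = 0.
Proof.
move=> [fin _]; exists (finmap.enum_fset (fset_set [set v | f.1 v != 0 \/ f.2 v != 0])).
  exact: finmap.fset_uniq.
move=> v; rewrite in_fset_set // notin_setE /=.
by move=> /not_orP[/negP/negPn/eqP -> /negP/negPn/eqP ->].
Qed.

Lemma Cc_of_seq_support f (r : seq (word N)) :
  (forall v, v \notin r -> f.1 v = 0 /\ f.2 v = 0) ->
  (forall v, ~~ admissible A v -> f.1 v = 0 /\ f.2 v = 0) -> Cc A f.
Proof.
move=> fr fA; split => //; apply: (sub_finite_set _ (finite_seq r)) => v /= f0.
by apply/negPn/negP => /fr[f1 f2]; move: f0; rewrite f1 f2 eqxx; case.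
Qed.

Definition sqnorm2 f v : R := Normc.normc (f.1 v) ^+ 2 + Normc.normc (f.2 v) ^+ 2.

Lemma norm2E f : norm2 f = Num.sqrt (\sum_(v \in [set: word N]) sqnorm2 f v).
Proof. by []. Qed.

Lemma sqnorm2_ge0 f v : 0 <= sqnorm2 f v.
Proof. by rewrite addr_ge0 ?sqr_ge0. Qed.

Lemma sqnorm2_eq0 f v : f.1 v = 0 -> f.2 v = 0 -> sqnorm2 f v = 0.
Proof. by rewrite /sqnorm2 => -> ->; rewrite Normc.normc0 expr0n addr0. Qed.

Lemma norm2_single f w : (forall v, v != w -> f.1 v = 0 /\ f.2 v = 0) ->
  norm2 f = Num.sqrt (sqnorm2 f w).
Proof.
move=> fw; rewrite norm2E (fsumT_seq (r := [:: w])) ?big_seq1 // => v.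
by rewrite inE => /fw[]; exact: sqnorm2_eq0.
Qed.

Definition len_flip g f : fn2 R N :=
  (fun mu => ((g (size mu))%:C)%C * f.2 mu, fun mu => ((g (size mu))%:C)%C * f.1 mu).

Lemma D_Vs_len_flip (s : R) : D_Vs s = len_flip (fun n => n%:R `^ s).
Proof. by []. Qed.

Lemma D_BP_len_flip : @D_BP R N = len_flip (fun n => expR n%:R).
Proof. by []. Qed.

Lemma normc_realC (c : R) : Normc.normc ((c%:C)%C : R[i]) = `|c|.
Proof. by rewrite /Normc.normc /= expr0n /= addr0 sqrtr_sqr. Qed.

Lemma sqnorm2_len_flip g f v : `|g (size v)| <= 1 ->
  sqnorm2 (len_flip g f) v <= sqnorm2 f v.
Proof.
move=> g1; have g2 : `|g (size v)| ^+ 2 <= 1 by rewrite exprn_ile1.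
rewrite /sqnorm2 /= !Normc.normcM normc_realC !exprMn addrC.
by apply: lerD; rewrite -[leRHS]mul1r ler_wpM2r ?sqr_ge0.
Qed.

Definition shift (i : 'I_N) phi : fn R N :=
  fun v => if v is a :: w then (if admissible A v && (a == i) then phi w else 0) else 0.

Definition unshift (i : 'I_N) phi : fn R N :=
  fun w => if admissible A (i :: w) then phi (i :: w) else 0.

Definition shift2 i f : fn2 R N := (shift i f.1, shift i f.2).
Definition unshift2 i f : fn2 R N := (unshift i f.1, unshift i f.2).

Lemma chiC_seq1 (i : 'I_N) (x : iseq N) : chiC R [:: i] x = (x 0%N == i)%:R.
Proof.
rewrite /chiC; have -> : [forall k : 'I_1, x k == nth (x k) [:: i] k] = (x 0%N == i).
  by apply/forallP/idP => [/(_ ord0)//|xi k]; rewrite (ord1 k).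
by case: (x 0%N == i).
Qed.

Lemma frak_s_shift (t : word N -> iseq N) i phi :
  cylinder_condition A t -> frak_s A t i phi = shift i phi.
Proof.
move=> ht; apply/funext => -[|a w]; rewrite /frak_s /pi_t /Vsigma /shift.
  by case: (admissible A [::]); rewrite ?mulr0.
have [adm|//] := boolP (admissible A (a :: w)).
have [_ cyl] := ht _ adm; rewrite chiC_seq1 (cyl 0%N) //=.
by case: (a == i); rewrite ?mul1r ?mul0r.
Qed.

Lemma frak_s2_shift2 (tp tm : word N -> iseq N) i :
  cylinder_condition A tp -> cylinder_condition A tm -> frak_s2 A tp tm i = shift2 i.
Proof. by move=> htp htm; apply/funext => f; rewrite /frak_s2 !frak_s_shift. Qed.

Lemma shift_delta i w :
  shift i (delta R w) = if admissible A (i :: w) then delta R (i :: w) else @fn0 R N.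
Proof.
case: ifP => adm; apply/funext => -[|a u]; rewrite /shift /delta /fn0 // ?eqseq_cons;
  have [->|] := eqVneq a i; rewrite ?andbF ?andbT //;
  by have [->|] := eqVneq u w; rewrite ?adm ?if_same.
Qed.

Lemma shift_fn0 i : shift i (@fn0 R N) = @fn0 R N.
Proof. by apply/funext => -[|a u] //=; rewrite /shift; case: ifP. Qed.

Lemma ip_delta_fn0 w f : ip (delta R w, @fn0 R N) f = f.1 w.
Proof.
rewrite /ip (fsumT_seq (r := [:: w])) //; last first.
  by move=> v; rewrite inE /= /delta /fn0 => /negbTE ->; rewrite conjC0 !mul0r addr0.
by rewrite big_seq1 /= /delta /fn0 eqxx conjC1 conjC0 mul1r mul0r addr0.
Qed.

Lemma ip_fn0_delta w f : ip (@fn0 R N, delta R w) f = f.2 w.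
Proof.
rewrite /ip (fsumT_seq (r := [:: w])) //; last first.
  by move=> v; rewrite inE /= /delta /fn0 => /negbTE ->; rewrite conjC0 !mul0r addr0.
by rewrite big_seq1 /= /delta /fn0 eqxx conjC1 conjC0 mul1r mul0r add0r.
Qed.

Lemma ip_fn0 f : ip (@fn0 R N, @fn0 R N) f = 0.
Proof. by apply: fsbig1 => v _; rewrite /fn0 conjC0 !mul0r addr0. Qed.

Lemma adj_shift2 i : adj A (shift2 i) = unshift2 i.
Proof.
apply/funext => f; rewrite /adj /unshift2 /unshift /shift2; cbn [fst snd].
rewrite shift_fn0; congr pair; apply/funext => w; rewrite shift_delta;
  have [adm|_] := boolP (admissible A (i :: w)).
- by rewrite (admissible_behead adm) ip_delta_fn0.
- by rewrite ip_fn0; case: ifP.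
- by rewrite (admissible_behead adm) ip_fn0_delta.
- by rewrite ip_fn0; case: ifP.
Qed.

Lemma comm_len_flip_shift2 g i f :
  comm (len_flip g) (shift2 i) f = shift2 i (len_flip (fun n => g n.+1 - g n) f).
Proof.
rewrite /comm /len_flip /shift2 /shift; cbn [fst snd].
by congr pair; apply/funext => -[|a u]; rewrite ?mulr0 ?subr0 //;
  case: ifP; rewrite ?mulr0 ?subr0 // rmorphB mulrBl.
Qed.

Lemma comm_len_flip_unshift2 g i f :
  comm (len_flip g) (unshift2 i) f = unshift2 i (len_flip (fun n => g n.-1 - g n) f).
Proof.
rewrite /comm /len_flip /unshift2 /unshift; cbn [fst snd].
by congr pair; apply/funext => w; case: ifP; rewrite ?mulr0 ?subr0 // rmorphB mulrBl.
Qed.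

Lemma Cc_shift2 i : preserves_Cc A (shift2 i).
Proof.
move=> f /Cc_seq_support[r _ fr]; apply: (@Cc_of_seq_support _ (map (cons i) r)).
  move=> [|a u] // ur; rewrite /shift2 /shift; cbn [fst snd].
  case: ifP => // /andP[_ /eqP ai]; apply: fr.
  by apply: contra ur => ur; rewrite ai map_f.
by move=> [|a u] // nadm; rewrite /shift2 /shift; cbn [fst snd]; rewrite (negbTE nadm).
Qed.

Lemma Cc_unshift2 i : preserves_Cc A (unshift2 i).
Proof.
move=> f /Cc_seq_support[r _ fr]; apply: (@Cc_of_seq_support _ (map behead r)).
  move=> w /= wr; rewrite /unshift; case: ifP => // _; apply: fr.
  by apply: contra wr => /(map_f behead).
move=> w /= nadm; rewrite /unshift.
by case: ifP => // /admissible_behead; rewrite (negbTE nadm).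
Qed.

Lemma sqnorm2_shift2 i f v : sqnorm2 (shift2 i f) v =
  if v is a :: u then (if admissible A v && (a == i) then sqnorm2 f u else 0) else 0.
Proof.
rewrite /sqnorm2 /shift2 /shift; cbn [fst snd].
by case: v => [|a u]; [|case: ifP]; rewrite // Normc.normc0 expr0n addr0.
Qed.

Lemma sum_sqnorm2_shift2 i f (r : seq (word N)) : uniq r ->
  (forall v, v \notin r -> f.1 v = 0 /\ f.2 v = 0) ->
  \sum_(v \in [set: word N]) sqnorm2 (shift2 i f) v <=
  \sum_(v \in [set: word N]) sqnorm2 f v.
Proof.
move=> ur fr; apply: (@ler_fsum_comp _ _ (cons i) _ _ r) => //.
- by move=> w1 w2 [].
- by move=> w /fr[]; exact: sqnorm2_eq0.
- move=> [|a u] iur; rewrite sqnorm2_shift2 //; case: ifP => // /andP[_ /eqP ai].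
  have /fr[] : u \notin r by apply: contra iur => ur'; rewrite ai map_f.
  exact: sqnorm2_eq0.
- by move=> w; rewrite sqnorm2_shift2 eqxx andbT; case: ifP; rewrite ?sqnorm2_ge0.
Qed.

Lemma sqnorm2_unshift2 i f w :
  sqnorm2 (unshift2 i f) w = if admissible A (i :: w) then sqnorm2 f (i :: w) else 0.
Proof.
rewrite /sqnorm2 /unshift2 /unshift; cbn [fst snd].
by case: ifP; rewrite // Normc.normc0 expr0n addr0.
Qed.

Lemma sum_sqnorm2_unshift2 i f (r : seq (word N)) : uniq r ->
  (forall v, v \notin r -> f.1 v = 0 /\ f.2 v = 0) ->
  \sum_(v \in [set: word N]) sqnorm2 (unshift2 i f) v <=
  \sum_(v \in [set: word N]) sqnorm2 f v.
Proof.
move=> ur fr; apply: (@ler_fsum_compr _ _ (cons i) _ _ (undup (map behead r)) r).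
- by move=> w1 w2 [].
- exact: undup_uniq.
- move=> w wr; rewrite sqnorm2_unshift2; case: ifP => // _.
  have /fr[] : i :: w \notin r by apply: contra wr => /(map_f behead); rewrite mem_undup.
  exact: sqnorm2_eq0.
- by move=> v /fr[]; exact: sqnorm2_eq0.
- exact: sqnorm2_ge0.
- by move=> w; rewrite sqnorm2_unshift2; case: ifP; rewrite ?sqnorm2_ge0.
Qed.

Lemma bounded_comm_len_flip_shift2 g i : (forall n, `|g n.+1 - g n| <= 1) ->
  bounded_comm A (len_flip g) (shift2 i).
Proof.
move=> dg1; exists 1 => f /Cc_seq_support[r ur fr].
rewrite mul1r comm_len_flip_shift2 !norm2E ler_wsqrtr //.
apply: le_trans (sum_sqnorm2_shift2 i ur _) _ => [v /fr[/= -> ->]|].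
  by rewrite !mulr0.
apply: (ler_fsum ur) => [v /fr[f1 f2]|v]; last exact: sqnorm2_len_flip.
by rewrite !sqnorm2_eq0 //= ?f1 ?f2 ?mulr0.
Qed.

Lemma bounded_comm_len_flip_unshift2 g i : (forall n, `|g n.+1 - g n| <= 1) ->
  bounded_comm A (len_flip g) (unshift2 i).
Proof.
move=> dg1; have dg1' n : `|g n.-1 - g n| <= 1.
  by case: n => [|n]; rewrite ?subrr ?normr0 // distrC.
exists 1 => f /Cc_seq_support[r ur fr].
rewrite mul1r comm_len_flip_unshift2 !norm2E ler_wsqrtr //.
apply: le_trans (sum_sqnorm2_unshift2 i ur _) _ => [v /fr[/= -> ->]|].
  by rewrite !mulr0.
apply: (ler_fsum ur) => [v /fr[f1 f2]|v]; last exact: sqnorm2_len_flip.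
by rewrite !sqnorm2_eq0 //= ?f1 ?f2 ?mulr0.
Qed.

Lemma Cc_delta w : admissible A w -> Cc A (delta R w, @fn0 R N).
Proof.
move=> adm; apply: (@Cc_of_seq_support _ [:: w]) => v; rewrite /delta /fn0 /=.
  by rewrite inE => /negbTE ->.
by case: eqVneq => [->|//]; rewrite adm.
Qed.

Lemma norm2_delta w : norm2 (delta R w, @fn0 R N) = 1.
Proof.
rewrite (norm2_single (w := w)) => [|v /negbTE vw]; last by rewrite /delta /fn0 /= vw.
rewrite /sqnorm2 /delta /fn0; cbn [fst snd].
by rewrite eqxx Normc.normc1 Normc.normc0 expr1n expr0n addr0 sqrtr1.
Qed.

Lemma norm2_comm_len_flip_delta g i w : admissible A (i :: w) ->
  norm2 (comm (len_flip g) (shift2 i) (delta R w, @fn0 R N)) =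
  `|g (size w).+1 - g (size w)|.
Proof.
move=> adm; rewrite comm_len_flip_shift2 (norm2_single (w := i :: w)).
  rewrite sqnorm2_shift2 adm eqxx /sqnorm2 /len_flip /delta /fn0; cbn [fst snd].
  by rewrite eqxx mulr0 mulr1 Normc.normc0 expr0n add0r normc_realC sqrtr_sqr normr_id.
move=> v vw; rewrite /shift2 /shift; cbn [fst snd].
case: v vw => [|a u] //; case: ifP => // /andP[_ /eqP ->] iuw.
have /negbTE uw : u != w by apply: contra iuw => /eqP ->.
by rewrite /len_flip /delta /fn0 /= uw !mulr0.
Qed.

End ShiftOperators.

Lemma admissible_words (N : nat) (A : 'M[bool]_N) :
  (forall a : 'I_N, exists b : 'I_N, A a b) -> forall i : 'I_N,
  exists w : nat -> word N, forall k, size (w k) = k /\ admissible A (i :: w k).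
Proof.
move=> no_zero_row i; pose next a := odflt a [pick b | A a b].
have A_next a : A a (next a).
  rewrite /next; case: pickP => [b //|noA].
  by have [b ab] := no_zero_row a; rewrite noA in ab.
have path_traject k a : path (fun a b => A a b) a (traject next (next a) k).
  by elim: k a => [|k IH] a //=; rewrite A_next IH.
exists (fun k => traject next (next i) k) => k.
by rewrite size_traject; split=> //; exact: path_traject.
Qed.

Theorem proposition4p18 (R : realType) (N : nat) (A : 'M[bool]_N)
  (no_zero_row : forall a : 'I_N, exists b : 'I_N, A a b)
  (no_zero_col : forall b : 'I_N, exists a : 'I_N, A a b)
  (tp tm : word N -> iseq N)
  (htp : cylinder_condition A tp) (htm : cylinder_condition A tm)
  (i : 'I_N) :
  let si := frak_s2 A tp tm i in
  (preserves_Cc A si /\ preserves_Cc A (adj A si)) /\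
  (forall s : R, 0 < s <= 1 ->
     bounded_comm A (D_Vs s) si /\ bounded_comm A (D_Vs s) (adj A si)) /\
  (exists fk : nat -> fn2 R N,
     (forall k, Cc A (fk k) /\ norm2 (fk k) = 1) /\
     (norm2 (comm (@D_BP R N) si (fk k)) @[k --> \oo] --> +oo)).
Proof.
move=> si; rewrite /si frak_s2_shift2 // adj_shift2.
split; first by split; [exact: Cc_shift2 | exact: Cc_unshift2].
split=> [s s01|].
  rewrite D_Vs_len_flip; split;
    [apply: bounded_comm_len_flip_shift2 | apply: bounded_comm_len_flip_unshift2];
    by move=> n; exact: powR_succ_sub.
have [w hw] := admissible_words no_zero_row i.
exists (fun k => (delta R (w k), @fn0 R N)); split.
  move=> k; have [_ adm] := hw k.
  by split; [exact/Cc_delta/(admissible_behead adm) | exact: norm2_delta].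
apply: (ger_cvgy _ cvgr_idn); apply: nearW => k; have [size_wk adm] := hw k.
rewrite D_BP_len_flip norm2_comm_len_flip_delta // size_wk.
exact: le_trans (expR_succ_sub R k) (ler_norm _).
Qed.
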